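(* Let $\mathcal{H}$ be a complex Hilbert space, let $A\in\mathcal{B}(\mathcal{H})$ be a nonzero positive operator, and let $P,Q\in\mathcal{B}_A(\mathcal{H})$. Then for every $\lambda\in[0,1]$, $$\omega_A(P\pm Q)\leq\min\{\mu,\nu\},$$ where $$\mu=\omega_A(P)+\frac12\left(\|P\|_A+\sqrt{\|\lambda^2PP^{\sharp_A}+QQ^{\sharp_A}\|_A}+\sqrt{\|(1-\lambda)^2PP^{\sharp_A}+Q^{\sharp_A}Q\|_A}\right)$$ and $$\nu=\frac32\omega_A(P)+\frac12\left[\sqrt{\lambda^2\omega_A^2(P)+\|Q\|_A^2}+\sqrt{(1-\lambda)^2\omega_A^2(P)+\|Q\|_A^2}\right].$$
   Context: For a positive operator $A$ on $\mathcal{H}$, $\langle x,y\rangle_A:=\langle Ax,y\rangle$ and $\|x\|_A:=\sqrt{\langle x,x\rangle_A}$. $\mathcal{B}_A(\mathcal{H})$ is the set of $T\in\mathcal{B}(\mathcal{H})$ with $\mathcal{R}(T^*A)\subseteq\mathcal{R}(A)$; for such $T$, $T^{\sharp_A}$ denotes the unique solution $X$ of $AX=T^*A$ with $\mathcal{R}(X)\subseteq\overline{\mathcal{R}(A)}$. For $T$ bounded with respect to $\|\cdot\|_A$: $\|T\|_A:=\sup\{\|Tx\|_A:\|x\|_A=1\}$ and $\omega_A(T):=\sup\{|\langle Tx,x\rangle_A|:\|x\|_A=1\}$. *)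

From mathcomp Require Import all_boot all_order all_algebra.
From mathcomp Require Import complex.
From mathcomp Require Import classical_sets reals.
Set Implicit Arguments. Unset Strict Implicit. Unset Printing Implicit Defensive.
Import Order.TTheory GRing.Theory Num.Theory.
Local Open Scope ring_scope.
Local Open Scope classical_set_scope.

Section Hilbert.
Variables (R : realType) (H : lmodType R[i]) (ip : H -> H -> R[i]).

Definition is_inner_product : Prop :=
  [/\ (forall (a : R[i]) (x y z : H), ip (a *: x + y) z = a * ip x z + ip y z),
      (forall x y : H, ip y x = (ip x y)^*)%C,
      (forall x : H, 0 <= ip x x) &
      (forall x : H, ip x x = 0 -> x = 0)].

Definition hnorm (x : H) : R := Num.sqrt (@complex.Re R (ip x x)).

Definition hcomplete : Prop :=
  forall u : nat -> H,
    (forall e : R, 0 < e -> exists N : nat, forall m n : nat,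
        (N <= m)%N -> (N <= n)%N -> hnorm (u m - u n) < e) ->
    exists l : H, forall e : R, 0 < e -> exists N : nat, forall n : nat,
        (N <= n)%N -> hnorm (u n - l) < e.

Definition hilbert_space : Prop := is_inner_product /\ hcomplete.

Definition bounded_op (T : H -> H) : Prop :=
  (forall (a : R[i]) (x y : H), T (a *: x + y) = a *: T x + T y) /\
  exists c : R, forall x : H, hnorm (T x) <= c * hnorm x.

Definition is_adjoint (T S : H -> H) : Prop :=
  bounded_op S /\ forall x y : H, ip (T x) y = ip x (S y).

Definition positive_op (A : H -> H) : Prop :=
  bounded_op A /\ forall x : H, 0 <= ip (A x) x.

Definition in_closure_range (A : H -> H) (y : H) : Prop :=
  forall e : R, 0 < e -> exists x : H, hnorm (y - A x) < e.

(* T \in B_A(H) : T \in B(H) and R(T^* A) \subseteq R(A) *)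
Definition in_BA (A T : H -> H) : Prop :=
  bounded_op T /\
  exists S : H -> H, is_adjoint T S /\ forall x : H, exists y : H, S (A x) = A y.

(* X = T^{#_A}: the (unique) solution of A X = T^* A with R(X) \subseteq closure R(A) *)
Definition is_Asharp (A T X : H -> H) : Prop :=
  bounded_op X /\
  exists S : H -> H, [/\ is_adjoint T S,
     (forall x : H, A (X x) = S (A x)) &
     (forall x : H, in_closure_range A (X x))].

Definition ipA (A : H -> H) (x y : H) : R[i] := ip (A x) y.
Definition normA (A : H -> H) (x : H) : R := Num.sqrt (@complex.Re R (ipA A x x)).

Definition opnormA (A T : H -> H) : R :=
  sup [set normA A (T x) | x in [set x : H | normA A x = 1]].

Definition cmod (z : R[i]) : R :=
  Num.sqrt (complex.Re z ^+ 2 + complex.Im z ^+ 2).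

Definition numradA (A T : H -> H) : R :=
  sup [set cmod (ipA A (T x) x) | x in [set x : H | normA A x = 1]].

End Hilbert.

From mathcomp Require Import all_boot all_order all_algebra.
From mathcomp Require Import complex.
From mathcomp Require Import classical_sets reals.
From mathcomp Require Import boolp ring lra zify.
Import Order.TTheory GRing.Theory Num.Theory.
Local Open Scope ring_scope.
Local Open Scope classical_set_scope.
Set Implicit Arguments. Unset Strict Implicit. Unset Printing Implicit Defensive.

(* Both bounds exceed omega_A(P) + omega_A(Q), which dominates omega_A(P +- Q)
   by the triangle inequality.  Indeed omega_A(Q) <= ||Q||_A, and
   |<Qx, x>_A| = |<x, Q^# x>_A| <= ||Q^# x||_A with
   ||Q^# x||_A^2 = Re <Q Q^# x, x>_A <= Re <(l^2 P P^# + Q Q^#) x, x>_A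
   because P P^# is A-positive; likewise ||Q x||_A^2 = Re <Q^# Q x, x>_A.

   The real work is to show that the sets whose suprema define ||T||_A and
   omega_A(T) are bounded, since [sup] of an unbounded set is 0.  Let B be
   A-selfadjoint with ||B y|| <= b ||y|| (b >= 1), and ||y||_A <= a ||y||.
   Iterating Cauchy-Schwarz gives, for ||x||_A = 1,
   ||Bx||_A^(2^n) <= ||B^(2^n) x||_A <= a b^(2^n) ||x||, so ||Bx||_A <= b.
   An operator T with an A-adjoint T^# is then handled through B = T^# T. *)

Section Sesquilinear.
Variables (R : realType) (H : lmodType R[i]) (g : H -> H -> R[i]).
Local Open Scope complex_scope.
Hypothesis gDl : forall (a : R[i]) (x y z : H), g (a *: x + y) z = a * g x z + g y z.
Hypothesis gDr : forall (a : R[i]) (x y z : H), g z (a *: x + y) = a^* * g z x + g z y.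

Lemma sesqDl u v w : g (u + v) w = g u w + g v w.
Proof. by rewrite -{1}[u]scale1r gDl mul1r. Qed.

Lemma sesqDr u v w : g w (u + v) = g w u + g w v.
Proof. by rewrite -{1}[u]scale1r gDr rmorph1 mul1r. Qed.

Lemma sesq0l w : g 0 w = 0.
Proof. by apply: (addrI (g 0 w)); rewrite addr0 -sesqDl addr0. Qed.

Lemma sesq0r w : g w 0 = 0.
Proof. by apply: (addrI (g w 0)); rewrite addr0 -sesqDr addr0. Qed.

Lemma sesqZl c u w : g (c *: u) w = c * g u w.
Proof. by rewrite -[c *: u]addr0 gDl sesq0l addr0. Qed.

Lemma sesqZr c u w : g w (c *: u) = c^* * g w u.
Proof. by rewrite -[c *: u]addr0 gDr sesq0r addr0. Qed.

Lemma sesq_expand c x y :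
  g (x + c *: y) (x + c *: y) = g x x + c^* * g x y + c * g y x + c * c^* * g y y.
Proof. by rewrite sesqDl !sesqDr !sesqZl !sesqZr; ring. Qed.

(* Polarization with x + y and x + i y. *)
Lemma sesq_hermitian : (forall x, complex.Im (g x x) = 0) ->
  forall x y, g y x = (g x y)^*.
Proof.
move=> gR x y.
have := gR (x + 1 *: y); have := gR (x + 'i *: y); rewrite !sesq_expand.
move: (gR x) (gR y).
case: (g x x) => a1 a2; case: (g x y) => b1 b2; case: (g y x) => c1 c2.
case: (g y y) => d1 d2; rewrite -[1]/(1 +i* 0); simpc => /= h1 h2 h3 h4.
by apply/eqP; rewrite eq_complex /=; apply/andP; split; apply/eqP; lra.
Qed.

End Sesquilinear.

Lemma quadratic_ge0_discriminant (R : realType) (a b w : R) :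
  0 <= a -> 0 <= b -> 0 <= w ->
  (forall t, 0 <= a - 2 * t * w + t ^+ 2 * w * b) -> w <= a * b.
Proof.
move=> a0 b0 w0 h.
have [->|wn0] := eqVneq w 0; first by rewrite mulr_ge0.
have {w0 wn0} wp : 0 < w by rewrite lt_neqAle eq_sym wn0 w0.
have [b_eq0|bn0] := eqVneq b 0.
  have := h ((a + 1) / (2 * w)); rewrite b_eq0 mulr0 addr0.
  have -> : 2 * ((a + 1) / (2 * w)) * w = a + 1 by field; rewrite gt_eqF.
  lra.
have {b0 bn0} bp : 0 < b by rewrite lt_neqAle eq_sym bn0 b0.
have : 0 <= (a - 2 * b^-1 * w + b^-1 ^+ 2 * w * b) * b by rewrite mulr_ge0 // ltW.
have -> : (a - 2 * b^-1 * w + b^-1 ^+ 2 * w * b) * b = a * b - w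
  by field; rewrite gt_eqF.
lra.
Qed.

Section ComplexModulus.
Variable R : realType.
Implicit Types z w : R[i].

Lemma cmod_ge0 z : 0 <= cmod z.
Proof. exact: sqrtr_ge0. Qed.

Lemma Re_le_cmod z : complex.Re z <= cmod z.
Proof.
rewrite /cmod; apply: le_trans (ler_norm _) _.
by rewrite -sqrtr_sqr ler_sqrt ?addr_ge0 ?sqr_ge0 // lerDl sqr_ge0.
Qed.

Lemma cmod_normc z : cmod z = Normc.normc z.
Proof. by case: z. Qed.

Lemma cmodD z w : cmod (z + w) <= cmod z + cmod w.
Proof. by rewrite !cmod_normc (@le_normcD R). Qed.

Lemma cmodN z : cmod (- z) = cmod z.
Proof. by rewrite !cmod_normc (@normcN R). Qed.

Lemma Re_scaleD (t : R) z w :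
  complex.Re (t%:C%C * z + w) = t * complex.Re z + complex.Re w.
Proof. by case: z => a b; case: w => c d /=; rewrite mul0r subr0. Qed.

End ComplexModulus.

Section PositiveForm.
Variables (R : realType) (H : lmodType R[i]) (g : H -> H -> R[i]).
Local Open Scope complex_scope.
Hypothesis gDl : forall (a : R[i]) (x y z : H), g (a *: x + y) z = a * g x z + g y z.
Hypothesis gC : forall x y, g y x = (g x y)^*.
Hypothesis gP : forall x, 0 <= g x x.

Local Notation seminorm x := (Num.sqrt (complex.Re (g x x))).

Lemma hermitianDr (a : R[i]) (x y z : H) : g z (a *: x + y) = a^* * g z x + g z y.
Proof. by rewrite gC gDl rmorphD rmorphM /= -!gC. Qed.

Lemma form_diag_real x : (complex.Re (g x x))%:C = g x x.
Proof. by have := gP x; case: (g x x) => a b; rewrite lecE /= => /andP[/eqP -> _]. Qed.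

Lemma Re_form_ge0 x : 0 <= complex.Re (g x x).
Proof. by have := gP x; case: (g x x) => a b; rewrite lecE /= => /andP[_ ->]. Qed.

Lemma form_cauchy_schwarz x y : cmod (g x y) <= seminorm x * seminorm y.
Proof.
rewrite -sqrtrM ?Re_form_ge0 // /cmod ler_sqrt ?mulr_ge0 ?Re_form_ge0 //.
apply: quadratic_ge0_discriminant; rewrite ?Re_form_ge0 ?addr_ge0 ?sqr_ge0 // => t.
(* Positivity at x - t <x, y> y, a quadratic in the real t. *)
have := gP (x + (- (t%:C * g x y)) *: y).
rewrite sesq_expand //; last exact: hermitianDr.
rewrite (gC x y); move: (gP x) (gP y).
case: (g x x) => a1 a2; case: (g x y) => b1 b2; case: (g y y) => d1 d2.
rewrite -[t%:C]/(t +i* 0); simpc => /= /andP[/eqP a20 a1p] /andP[/eqP -> d1p].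
move=> /andP[_ h]; nra.
Qed.

Lemma seminorm_scaleD_le (t : R) x y : 0 <= t ->
  seminorm (t%:C *: x + y) <= t * seminorm x + seminorm y.
Proof.
move=> t0.
have hcs := form_cauchy_schwarz x y; have hre := Re_le_cmod (g x y).
set al := seminorm x in hcs *; set be := seminorm y in hcs *.
have al0 : 0 <= al := sqrtr_ge0 _.
have be0 : 0 <= be := sqrtr_ge0 _.
have eal : al ^+ 2 = complex.Re (g x x) by rewrite sqr_sqrtr // Re_form_ge0.
have ebe : be ^+ 2 = complex.Re (g y y) by rewrite sqr_sqrtr // Re_form_ge0.
rewrite -[X in _ <= X]ger0_norm ?addr_ge0 ?mulr_ge0 // -sqrtr_sqr.
rewrite ler_sqrt ?sqr_ge0 // addrC sesq_expand //; last exact: hermitianDr.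
rewrite (gC x y) -(form_diag_real x) -(form_diag_real y) -eal -ebe.
move: hre hcs; case: (g x y) => p q /= hre hcs.
rewrite !(mul0r, mulr0, oppr0, subr0, addr0); nra.
Qed.

End PositiveForm.

Lemma bernoulli_ineq (R : realType) (d : R) n : 0 <= d -> 1 + n%:R * d <= (1 + d) ^+ n.
Proof.
move=> d0; elim: n => [|n IH]; first by rewrite mul0r addr0 expr0.
have nd0 : 0 <= n%:R * d by rewrite mulr_ge0.
rewrite exprS -nat1r; nra.
Qed.

Lemma expr_expn2_unbounded (R : realType) (r K : R) :
  1 < r -> ~ (forall n, r ^+ (2 ^ n) <= K).
Proof.
move=> r1 h.
have d0 : 0 < r - 1 by rewrite subr_gt0.
have K0 : 0 <= K.
  by apply: le_trans (h 0%N); rewrite exprn_ge0 // ltW // (lt_trans ltr01).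
pose m := Num.bound (K / (r - 1)).
have hm := archi_boundP (divr_ge0 K0 (ltW d0)).
have hm2 : (m%:R : R) <= (2 ^ m)%:R by rewrite ler_nat ltnW // ltn_expl.
have := bernoulli_ineq (2 ^ m) (ltW d0); rewrite addrCA subrr addr0.
have : K < (2 ^ m)%:R * (r - 1) by rewrite -ltr_pdivrMr //; apply: lt_le_trans hm hm2.
have := h m; lra.
Qed.

Lemma iter_comp_self (T : Type) (f : T -> T) k x : iter k (f \o f) x = iter (2 * k) f x.
Proof. by elim: k => [//|k IH]; rewrite mulnS !iterS IH. Qed.

Lemma sup_ge0 (R : realType) (E : set R) : (forall y, E y -> 0 <= y) -> 0 <= sup E.
Proof.
move=> h; have [hs|hs] := pselect (has_sup E); last by rewrite sup_out.
by case: (hs) => -[y Ey] hu; apply: le_trans (h y Ey) (ub_le_sup hu Ey).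
Qed.

Lemma sup_le_nonneg (R : realType) (E : set R) c :
  0 <= c -> (forall y, E y -> y <= c) -> sup E <= c.
Proof.
move=> c0 h; have [ne|/set0P/negP/negbNE/eqP ->] := pselect (E !=set0).
  exact: ge_sup.
by rewrite sup0.
Qed.

Lemma le_sqrt_addl (R : realType) (a b : R) : 0 <= a -> 0 <= b -> b <= Num.sqrt (a + b ^+ 2).
Proof.
move=> a0 b0; rewrite -{1}[b]ger0_norm // -sqrtr_sqr ler_sqrt ?addr_ge0 ?sqr_ge0 //.
by rewrite lerDr.
Qed.

Section ASemiInnerProduct.
Variables (R : realType) (H : lmodType R[i]) (ip : H -> H -> R[i]) (A : H -> H).
Hypothesis hip : is_inner_product ip.
Hypothesis hA : positive_op ip A.
Local Open Scope complex_scope.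

Local Notation s := (ipA ip A).
Local Notation nA := (normA ip A).
Local Notation hn := (hnorm ip).

Definition hbounded (T : H -> H) := exists b : R, forall x, hn (T x) <= b * hn x.
Definition Abounded (T : H -> H) := exists c : R, forall x, nA x = 1 -> nA (T x) <= c.
Definition Aadjoint (T X : H -> H) := forall x y, s (T x) y = s x (X y).

Let ipDl : forall (a : R[i]) (x y z : H), ip (a *: x + y) z = a * ip x z + ip y z.
Proof. by case: hip. Qed.
Let ipC : forall x y : H, ip y x = (ip x y)^*.
Proof. by case: hip. Qed.
Let ipP : forall x : H, 0 <= ip x x.
Proof. by case: hip. Qed.
Let AD : forall (a : R[i]) (x y : H), A (a *: x + y) = a *: A x + A y.
Proof. by case: hA => -[]. Qed.

Lemma ipADl (a : R[i]) (x y z : H) : s (a *: x + y) z = a * s x z + s y z.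
Proof. by rewrite /ipA AD ipDl. Qed.

Lemma ipADr (a : R[i]) (x y z : H) : s z (a *: x + y) = a^* * s z x + s z y.
Proof. by rewrite /ipA (hermitianDr ipDl ipC). Qed.

Lemma ipA_ge0 x : 0 <= s x x.
Proof. by case: hA => _; apply. Qed.

Lemma ipA_hermitian x y : s y x = (s x y)^*.
Proof.
apply: (sesq_hermitian ipADl ipADr) => z.
by have := ipA_ge0 z; case: (s z z) => a b; rewrite lecE /= => /andP[/eqP -> _].
Qed.

Lemma A_selfadjoint u v : ip u (A v) = ip (A u) v.
Proof. by rewrite ipC -[ip (A v) u]/(s v u) ipA_hermitian conjcK. Qed.

Lemma ipA_cauchy_schwarz x y : cmod (s x y) <= nA x * nA y.
Proof. exact: (form_cauchy_schwarz ipADl ipA_hermitian ipA_ge0). Qed.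

Lemma normA_ge0 x : 0 <= nA x.
Proof. exact: sqrtr_ge0. Qed.

Lemma hnorm_ge0 x : 0 <= hn x.
Proof. exact: sqrtr_ge0. Qed.

Lemma sqr_normA x : nA x ^+ 2 = complex.Re (s x x).
Proof. by rewrite sqr_sqrtr // (Re_form_ge0 ipA_ge0). Qed.

Lemma normA_scaleD_le (t : R) x y : 0 <= t -> nA (t%:C *: x + y) <= t * nA x + nA y.
Proof. exact: (seminorm_scaleD_le ipADl ipA_hermitian ipA_ge0). Qed.

Lemma normA_le_hnorm : exists a : R, 0 <= a /\ forall x, nA x <= a * hn x.
Proof.
case: hA => -[_ [a ha]] _.
have a0 : 0 <= Num.max a 0 by rewrite le_max lexx orbT.
exists (Num.sqrt (Num.max a 0)); split => [|x]; first exact: sqrtr_ge0.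
rewrite /normA -[hn x]ger0_norm ?hnorm_ge0 // -sqrtr_sqr -sqrtrM //.
rewrite ler_sqrt ?mulr_ge0 ?sqr_ge0 ?hnorm_ge0 //.
apply: le_trans (Re_le_cmod _) _.
apply: le_trans (form_cauchy_schwarz ipDl ipC ipP _ _) _.
rewrite expr2 mulrA ler_wpM2r ?hnorm_ge0 //; apply: le_trans (ha x) _.
by rewrite ler_wpM2r ?hnorm_ge0 // le_max lexx.
Qed.

Lemma hbounded_ge1 T : hbounded T -> exists b : R, 1 <= b /\ forall x, hn (T x) <= b * hn x.
Proof.
case=> b hb; exists (Num.max b 1); split => [|x]; first by rewrite le_max lexx orbT.
by apply: le_trans (hb x) _; rewrite ler_wpM2r ?hnorm_ge0 // le_max lexx.
Qed.

Lemma hbounded_comp T U : hbounded T -> hbounded U -> hbounded (T \o U).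
Proof.
move=> /hbounded_ge1[a [a1 ha]] /hbounded_ge1[b [b1 hb]]; exists (a * b) => x /=.
by apply: le_trans (ha _) _; rewrite -mulrA ler_wpM2l // (le_trans ler01 a1).
Qed.

Lemma Aadjoint_sym T X : Aadjoint T X -> Aadjoint X T.
Proof. by move=> hT x y; rewrite ipA_hermitian -hT -ipA_hermitian. Qed.

Lemma Aadjoint_comp T X U Y : Aadjoint T X -> Aadjoint U Y -> Aadjoint (T \o U) (Y \o X).
Proof. by move=> hT hU x y /=; rewrite hT hU. Qed.

Lemma normA_iter_Aselfadjoint n : forall B, Aadjoint B B ->
  forall x, nA (B x) ^+ (2 ^ n) <= nA (iter (2 ^ n) B x) * nA x ^+ (2 ^ n - 1).
Proof.
elim: n => [|n IH] B hB x; first by rewrite expn0 subnn expr0 mulr1 expr1.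
have sqr_le : nA (B x) ^+ 2 <= nA (B (B x)) * nA x.
  rewrite sqr_normA hB; apply: le_trans (Re_le_cmod _) _.
  by rewrite mulrC; exact: ipA_cauchy_schwarz.
have := IH _ (Aadjoint_comp hB hB) x; rewrite iter_comp_self -expnS /= => hBB.
rewrite [in X in X <= _]expnS exprM.
apply: le_trans (_ : (nA (B (B x)) * nA x) ^+ (2 ^ n) <= _).
  by apply: lerXn2r; rewrite // nnegrE ?exprn_ge0 ?mulr_ge0 ?normA_ge0.
rewrite exprMn; apply: le_trans (ler_wpM2r (exprn_ge0 _ (normA_ge0 _)) hBB) _.
rewrite -mulrA -exprD.
suff -> : (2 ^ n - 1 + 2 ^ n = 2 ^ n.+1 - 1)%N by [].
by rewrite expnS; have := expn_gt0 2 n; lia.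
Qed.

Lemma Abounded_Aselfadjoint B : Aadjoint B B -> hbounded B -> Abounded B.
Proof.
move=> hB /hbounded_ge1 [b [b1 hb]].
have [a [a0 ha]] := normA_le_hnorm.
have b0 : 0 < b by apply: lt_le_trans ltr01 b1.
have hiter : forall k x, hn (iter k B x) <= b ^+ k * hn x.
  elim=> [|k IH] x; first by rewrite expr0 mul1r.
  rewrite iterS exprS -mulrA; apply: le_trans (hb _) _.
  by rewrite ler_wpM2l // ltW.
exists b => x nx1; rewrite leNgt; apply/negP => hlt.
apply: (@expr_expn2_unbounded _ (nA (B x) / b) (a * hn x)).
  by rewrite ltr_pdivlMr // mul1r.
move=> n; rewrite expr_div_n ler_pdivrMr ?exprn_gt0 //.
have := normA_iter_Aselfadjoint n hB x; rewrite nx1 expr1n mulr1 => h.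
apply: (le_trans h); apply: (le_trans (ha _)).
by rewrite -mulrA ler_wpM2l // mulrC; exact: hiter.
Qed.

Lemma Abounded_Aadjoint T X : Aadjoint T X -> hbounded T -> hbounded X -> Abounded T.
Proof.
move=> hT bT bX.
have [c hc] := Abounded_Aselfadjoint
  (Aadjoint_comp (Aadjoint_sym hT) hT) (hbounded_comp bX bT).
exists (c + 1) => x nx1.
have : nA (T x) ^+ 2 <= c.
  rewrite sqr_normA hT; apply: le_trans (Re_le_cmod _) _.
  by apply: le_trans (ipA_cauchy_schwarz _ _) _; rewrite nx1 mul1r; exact: hc.
have := normA_ge0 (T x); nra.
Qed.

Lemma Abounded_comp_Aadjoint T X : Aadjoint T X -> hbounded T -> hbounded X ->
  Abounded (T \o X).
Proof.
move=> hT bT bX; have bTX := hbounded_comp bT bX.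
exact: (Abounded_Aadjoint (Aadjoint_comp hT (Aadjoint_sym hT)) bTX bTX).
Qed.

Lemma Abounded_scaleD (t : R) U V : 0 <= t -> Abounded U -> Abounded V ->
  Abounded (fun x => t%:C *: U x + V x).
Proof.
move=> t0 [a ha] [b hb]; exists (t * a + b) => x nx.
apply: le_trans (normA_scaleD_le _ _ t0) _.
by apply: lerD; [apply: ler_wpM2l => //; exact: ha | exact: hb].
Qed.

Lemma normA_le_opnormA T x : Abounded T -> nA x = 1 -> nA (T x) <= opnormA ip A T.
Proof.
move=> [c hc] nx; apply: ub_le_sup; last by exists x.
by exists c => y [z hz <-]; exact: hc.
Qed.

Lemma opnormA_ge0 T : 0 <= opnormA ip A T.
Proof. by apply: sup_ge0 => y [z _ <-]; exact: normA_ge0. Qed.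

Lemma Re_ipA_le_opnormA T x : Abounded T -> nA x = 1 ->
  complex.Re (s (T x) x) <= opnormA ip A T.
Proof.
move=> hT nx; apply: le_trans (Re_le_cmod _) _.
apply: le_trans (ipA_cauchy_schwarz _ _) _; rewrite nx mulr1.
exact: normA_le_opnormA.
Qed.

Lemma ipA_le_numradA T x : Abounded T -> nA x = 1 -> cmod (s (T x) x) <= numradA ip A T.
Proof.
move=> [c hc] nx; apply: ub_le_sup; last by exists x.
exists c => y [z hz <-]; apply: le_trans (ipA_cauchy_schwarz _ _) _.
by rewrite hz mulr1; exact: hc.
Qed.

Lemma numradA_ge0 T : 0 <= numradA ip A T.
Proof. by apply: sup_ge0 => y [z _ <-]; exact: cmod_ge0. Qed.

Lemma numradA_le T c : 0 <= c -> (forall x, nA x = 1 -> cmod (s (T x) x) <= c) ->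
  numradA ip A T <= c.
Proof. by move=> c0 h; apply: sup_le_nonneg => // y [z hz <-]; exact: h. Qed.

Lemma numradA_le_opnormA T : Abounded T -> numradA ip A T <= opnormA ip A T.
Proof.
move=> hT; apply: numradA_le; first exact: opnormA_ge0.
move=> x nx; apply: le_trans (ipA_cauchy_schwarz _ _) _; rewrite nx mulr1.
exact: normA_le_opnormA.
Qed.

Lemma numradA_le_sqrt_opnormA T U Y : Abounded T ->
  (forall x, nA x = 1 -> cmod (s (U x) x) <= nA (Y x)) ->
  (forall x, nA x = 1 -> nA (Y x) ^+ 2 <= complex.Re (s (T x) x)) ->
  numradA ip A U <= Num.sqrt (opnormA ip A T).
Proof.
move=> hT hUY hYT; apply: numradA_le; first exact: sqrtr_ge0.
move=> x nx; apply: le_trans (hUY x nx) _.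
rewrite -[nA (Y x)]ger0_norm ?normA_ge0 // -sqrtr_sqr ler_sqrt ?opnormA_ge0 //.
exact: le_trans (hYT x nx) (Re_ipA_le_opnormA hT nx).
Qed.

Lemma numradA_triangle T U V : Abounded U -> Abounded V ->
  (forall x, cmod (s (T x) x) <= cmod (s (U x) x) + cmod (s (V x) x)) ->
  numradA ip A T <= numradA ip A U + numradA ip A V.
Proof.
move=> hU hV hT; apply: numradA_le => [|x nx]; first by rewrite addr_ge0 ?numradA_ge0.
by apply: le_trans (hT x) _; apply: lerD; exact: ipA_le_numradA.
Qed.

Lemma sqr_normA_Aadjoint T X x : Aadjoint T X -> nA (X x) ^+ 2 = complex.Re (s (T (X x)) x).
Proof. by move=> hT; rewrite sqr_normA hT. Qed.

Lemma Re_ipA_scaleD_ge (t : R) u v x : 0 <= t -> 0 <= complex.Re (s u x) ->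
  complex.Re (s v x) <= complex.Re (s (t%:C *: u + v) x).
Proof. by move=> t0 hu; rewrite ipADl Re_scaleD lerDr mulr_ge0. Qed.

Lemma Aadjoint_Asharp T X : is_Asharp ip A T X -> Aadjoint T X.
Proof.
case=> _ [S [[_ hS] hAX _]] x y.
by rewrite /ipA -A_selfadjoint hS -hAX A_selfadjoint.
Qed.

Section Sharp.
Variables (P Q Ps Qs : H -> H).
Hypotheses (bP : hbounded P) (bQ : hbounded Q) (bPs : hbounded Ps) (bQs : hbounded Qs).
Hypotheses (aP : Aadjoint P Ps) (aQ : Aadjoint Q Qs).

Let Re_PPs_ge0 x : 0 <= complex.Re (s (P (Ps x)) x).
Proof. by rewrite -(sqr_normA_Aadjoint _ aP) sqr_ge0. Qed.

Lemma numradA_addr_le : numradA ip A (fun x => P x + Q x) <= numradA ip A P + numradA ip A Q.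
Proof.
apply: numradA_triangle (Abounded_Aadjoint aP bP bPs) (Abounded_Aadjoint aQ bQ bQs) _.
by move=> x; rewrite (sesqDl ipADl) cmodD.
Qed.

Lemma numradA_subr_le : numradA ip A (fun x => P x - Q x) <= numradA ip A P + numradA ip A Q.
Proof.
apply: numradA_triangle (Abounded_Aadjoint aP bP bPs) (Abounded_Aadjoint aQ bQ bQs) _.
move=> x; rewrite (sesqDl ipADl) -scaleN1r (sesqZl ipADl) mulN1r.
by apply: le_trans (cmodD _ _) _; rewrite cmodN.
Qed.

Lemma numradA_le_sqrt_opnormA_QQs (t : R) : 0 <= t ->
  numradA ip A Q <= Num.sqrt (opnormA ip A (fun x => t%:C *: P (Ps x) + Q (Qs x))).
Proof.
move=> t0; apply: (numradA_le_sqrt_opnormA (Y := Qs)).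
- exact: Abounded_scaleD t0 (Abounded_comp_Aadjoint aP bP bPs)
    (Abounded_comp_Aadjoint aQ bQ bQs).
- by move=> x nx; rewrite aQ; apply: le_trans (ipA_cauchy_schwarz _ _) _; rewrite nx mul1r.
- move=> x _; rewrite (sqr_normA_Aadjoint _ aQ).
  exact: Re_ipA_scaleD_ge t0 (Re_PPs_ge0 x).
Qed.

Lemma numradA_le_sqrt_opnormA_QsQ (t : R) : 0 <= t ->
  numradA ip A Q <= Num.sqrt (opnormA ip A (fun x => t%:C *: P (Ps x) + Qs (Q x))).
Proof.
move=> t0; apply: (numradA_le_sqrt_opnormA (Y := Q)).
- exact: Abounded_scaleD t0 (Abounded_comp_Aadjoint aP bP bPs)
    (Abounded_comp_Aadjoint (Aadjoint_sym aQ) bQs bQ).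
- by move=> x nx; apply: le_trans (ipA_cauchy_schwarz _ _) _; rewrite nx mulr1.
- move=> x _; rewrite (sqr_normA_Aadjoint _ (Aadjoint_sym aQ)).
  exact: Re_ipA_scaleD_ge t0 (Re_PPs_ge0 x).
Qed.

Lemma numradA_le_opnormA_Q : numradA ip A Q <= opnormA ip A Q.
Proof. exact/numradA_le_opnormA/(Abounded_Aadjoint aQ). Qed.

End Sharp.
End ASemiInnerProduct.

Theorem corollary2p6 (R : realType) (H : lmodType R[i]) (ip : H -> H -> R[i])
  (hH : hilbert_space ip)
  (A : H -> H) (hA : positive_op ip A) (hA0 : exists x : H, A x <> 0)
  (P Q : H -> H) (hP : in_BA ip A P) (hQ : in_BA ip A Q)
  (Ps Qs : H -> H) (hPs : is_Asharp ip A P Ps) (hQs : is_Asharp ip A Q Qs)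
  (lam : R) (hlam0 : 0 <= lam) (hlam1 : lam <= 1) :
  let mu := numradA ip A P
      + 2^-1 * (opnormA ip A P
         + Num.sqrt (opnormA ip A (fun x => (lam ^+ 2)%:C%C *: P (Ps x) + Q (Qs x)))
         + Num.sqrt (opnormA ip A (fun x => ((1 - lam) ^+ 2)%:C%C *: P (Ps x) + Qs (Q x)))) in
  let nu := 3 / 2 * numradA ip A P
      + 2^-1 * (Num.sqrt (lam ^+ 2 * numradA ip A P ^+ 2 + opnormA ip A Q ^+ 2)
         + Num.sqrt ((1 - lam) ^+ 2 * numradA ip A P ^+ 2 + opnormA ip A Q ^+ 2)) in
  numradA ip A (fun x => P x + Q x) <= Num.min mu nu /\
  numradA ip A (fun x => P x - Q x) <= Num.min mu nu.
Proof.
move=> mu nu; case: hH => hip _.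
have bP : hbounded ip P := hP.1.2; have bQ : hbounded ip Q := hQ.1.2.
have bPs : hbounded ip Ps := hPs.1.2; have bQs : hbounded ip Qs := hQs.1.2.
have aP := Aadjoint_Asharp hip hA hPs; have aQ := Aadjoint_Asharp hip hA hQs.
have wQ_t1 := numradA_le_sqrt_opnormA_QQs hip hA bP bQ bPs bQs aP aQ (sqr_ge0 lam).
have wQ_t2 := numradA_le_sqrt_opnormA_QsQ hip hA bP bQ bPs bQs aP aQ (sqr_ge0 (1 - lam)).
have wQ_nQ := numradA_le_opnormA_Q hip hA bQ bQs aQ.
have wP0 := numradA_ge0 ip A P; have nP0 := opnormA_ge0 ip A P.
have wQ0 := numradA_ge0 ip A Q; have nQ0 := opnormA_ge0 ip A Q.
have wPl0 : 0 <= lam ^+ 2 * numradA ip A P ^+ 2 by rewrite mulr_ge0 ?sqr_ge0.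
have wPl1 : 0 <= (1 - lam) ^+ 2 * numradA ip A P ^+ 2 by rewrite mulr_ge0 ?sqr_ge0.
have nQ_s1 := le_sqrt_addl wPl0 nQ0; have nQ_s2 := le_sqrt_addl wPl1 nQ0.
suff sum_le : numradA ip A P + numradA ip A Q <= Num.min mu nu.
  split; apply: le_trans sum_le.
  - exact: (numradA_addr_le hip hA bP bQ bPs bQs aP aQ).
  - exact: (numradA_subr_le hip hA bP bQ bPs bQs aP aQ).
by rewrite le_min /mu /nu; apply/andP; split; lra.
Qed.
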